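(* Let $S$ be an ordered forest and $I$ a finite linear order. Then $S\otimes I$ with the relation $\sqsubseteq_{S\otimes I}$ is a forest, and, taken additionally with the linear order $\leq_{S\otimes I}$, it is an ordered forest.
   Context: A forest is a finite poset in which the set of predecessors of each element is linearly ordered (each element its own predecessor); $1\oplus T$ denotes the tree obtained by adding a new smallest element. An ordered tree has a linear order on the immediate successors of each node, inducing the lexicographic order ($v\leq w$ if $v\sqsubseteq w$; for incomparable $v,w$ compare the immediate successors of $v\wedge w$ below $v$ and $w$). An ordered forest is a forest $T$ with a linear order $\leq_T$ that is the restriction of the lexicographic order of some ordered-tree structure on $1\oplus T$. For $s$ in a forest $S$, ${\rm ht}(s)$ is the number of predecessors of $s$ (including $s$), ${\rm ht}(S)=\max_s{\rm ht}(s)$, and for $i<{\rm ht}(s)$, $s(i)$ is the predecessor of $s$ of height $i+1$. Let $n={\rm ht}(S)$ and $S\otimes I=\{(s,t)\in S\times I^{\leq n}\mid {\rm ht}(s)=|t|\}$, where $I^{\le n}$ are sequences $t=(t(0),\dots,t(|t|-1))$ in $I$ of length at most $n$. Set $(s_1,t_1)\sqsubseteq_{S\otimes I}(s_2,t_2)$ iff $s_1\sqsubseteq_S s_2$, $t_1\upharpoonright({\rm ht}(s_1)-1)=t_2\upharpoonright({\rm ht}(s_1)-1)$, and $t_1({\rm ht}(s_1)-1)\leq_I t_2({\rm ht}(s_1)-1)$. Set $(s_1,t_1)\leq_{S\otimes I}(s_2,t_2)$ iff the sequence $(s_1(0),t_1(0),\dots,s_1(h_1-1),t_1(h_1-1))$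 is lexicographically at most $(s_2(0),t_2(0),\dots,s_2(h_2-1),t_2(h_2-1))$, where $h_k={\rm ht}(s_k)$ and lexicographic comparison uses $\leq_S$ and $\leq_I$. *)

From mathcomp Require Import all_boot all_order.
Set Implicit Arguments. Unset Strict Implicit. Unset Printing Implicit Defensive.
Import Order.TTheory.

Definition is_porder (T : finType) (r : rel T) : Prop :=
  [/\ reflexive r, antisymmetric r & transitive r].

Definition is_linorder (T : finType) (r : rel T) : Prop :=
  is_porder r /\ total r.

Definition is_forest (T : finType) (sq : rel T) : Prop :=
  is_porder sq /\
  forall x y z, sq y x -> sq z x -> sq y z || sq z y.

Definition oplus1 (T : finType) (sq : rel T) : rel (option T) :=
  fun v w => match v, w with
             | None, _ => true
             | Some _, None => false
             | Some x, Some y => sq x y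
             end.

Definition imm_succ (T : finType) (sq : rel T) (u c : T) : bool :=
  [&& sq u c, u != c &
      ~~ [exists v, [&& sq u v, sq v c, v != u & v != c]]].

Definition ordered_tree_structure (T : finType) (sq : rel T) (sib : rel T)
  : Prop :=
  forall u,
   [/\ forall a, imm_succ sq u a -> sib a a,
       forall a b, imm_succ sq u a -> imm_succ sq u b ->
          sib a b -> sib b a -> a = b,
       forall a b c, imm_succ sq u a -> imm_succ sq u b -> imm_succ sq u c ->
          sib a b -> sib b c -> sib a c &
       forall a b, imm_succ sq u a -> imm_succ sq u b -> sib a b || sib b a].

(* Lexicographic order induced by an ordered-tree structure: v <= w if
   v is below w, or, for v,w incomparable, the immediate successors a,b of
   the meet u = v /\ w lying below v and w respectively satisfy a < b.
   (The meet is characterised as the node u having two distinct immediate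
   successors a below v and b below w.) *)
Definition lex_le (T : finType) (sq : rel T) (sib : rel T) : rel T :=
  fun v w => sq v w ||
    [exists u, exists a, exists b,
       [&& imm_succ sq u a, imm_succ sq u b, a != b,
           sq a v, sq b w & sib a b]].

Definition ordered_forest (T : finType) (sq : rel T) (le : rel T) : Prop :=
  [/\ is_forest sq, is_linorder le &
      exists sib : rel (option T),
        ordered_tree_structure (oplus1 sq) sib /\
        forall x y, le x y = lex_le (oplus1 sq) sib (Some x) (Some y)].

Definition ht (T : finType) (sq : rel T) (s : T) : nat := #|[set y | sq y s]|.

(* s(i): the predecessor of s of height i+1 (meaningful for i < ht s). *)
Definition pred_at (T : finType) (sq : rel T) (s : T) (i : nat) : T :=
  odflt s [pick y | sq y s && (ht sq y == i.+1)].

Definition tensor (S : finType) (sq : rel S) (I : finType) : finType :=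
  {s : S & (ht sq s).-tuple I}.

Section Tensor.
Variables (S : finType) (sqS leS : rel S) (d : Order.disp_t) (I : finOrderType d).

Local Notation ST := (tensor sqS I).

Definition tsq : rel ST := fun x y =>
  let: h1 := ht sqS (tag x) in
  [&& sqS (tag x) (tag y),
      take h1.-1 (tagged x) == take h1.-1 (tagged y) &
      match onth (tagged x) h1.-1, onth (tagged y) h1.-1 with
      | Some a, Some b => (a <= b)%O
      | _, _ => false
      end].

Fixpoint seqlex (X : eqType) (r : rel X) (s1 s2 : seq X) : bool :=
  match s1, s2 with
  | [::], _ => true
  | _ :: _, [::] => false
  | x :: s1', y :: s2' => if x == y then seqlex r s1' s2' else r x y
  end.

Definition sumle : rel (S + I) := fun u v =>
  match u, v with
  | inl a, inl b => leS a b
  | inr a, inr b => (a <= b)%O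
  | _, _ => false
  end.

Definition interleave (x : ST) : seq (S + I) :=
  flatten [seq [:: inl (pred_at sqS (tag x) p.1); inr p.2]
          | p <- zip (iota 0 (ht sqS (tag x))) (tagged x : seq I)].

Definition tle : rel ST := fun x y => seqlex sumle (interleave x) (interleave y).

End Tensor.

From mathcomp Require Import all_boot all_order.
Set Implicit Arguments. Unset Strict Implicit. Unset Printing Implicit Defensive.
Import Order.TTheory.

(* [tle] compares the interleaved sequences (s(0), t(0), ..., s(h-1), t(h-1))
   lexicographically, and [tsq x y] says exactly that the sequence of [y]
   extends that of [x] minus its last entry, followed by an entry of [I] above
   the last entry of [x].  Hence [tle] is a linear extension of [tsq] in which
   every principal up-set [{y | tsq a y}] is convex.  For any forest, such a
   linear extension is the lexicographic order of the ordered-tree structure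
   that orders siblings by the linear order itself. *)

Section Heights.
Variables (T : finType) (sq : rel T).

Lemma ht_gt0 : reflexive sq -> forall s, 0 < ht sq s.
Proof. by move=> sq_refl s; apply/card_gt0P; exists s; rewrite inE sq_refl. Qed.

Lemma ht_le : transitive sq -> forall y s, sq y s -> ht sq y <= ht sq s.
Proof.
move=> sq_trans y s sq_ys; apply/subset_leq_card/subsetP=> z.
by rewrite !inE => /sq_trans; apply.
Qed.

Hypothesis sq_porder : is_porder sq.

Lemma ht_lt y s : sq y s -> y != s -> ht sq y < ht sq s.
Proof.
case: sq_porder => sq_refl sq_anti sq_trans sq_ys neq_ys.
apply/proper_card/properP; split.
  by apply/subsetP=> z; rewrite !inE => /sq_trans; apply.
exists s; first by rewrite inE sq_refl.
rewrite inE; apply: contra neq_ys => sq_sy.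
by apply/eqP/sq_anti; rewrite sq_ys sq_sy.
Qed.

Lemma sq_ht_eq y s : sq y s -> ht sq y = ht sq s -> y = s.
Proof.
move=> sq_ys eq_ht; apply/eqP; apply: contraT => neq_ys.
by have := ht_lt sq_ys neq_ys; rewrite eq_ht ltnn.
Qed.

Lemma imm_succ_below u x : sq u x -> u != x -> exists2 a, imm_succ sq u a & sq a x.
Proof.
case: sq_porder => sq_refl _ sq_trans sq_ux neq_ux.
pose P v := [&& sq u v, sq v x & v != u].
have Px : P x by rewrite /P sq_ux sq_refl eq_sym.
case: (arg_minnP (ht sq) Px) => a /and3P[sq_ua sq_ax neq_au] min_a.
exists a => //; rewrite /imm_succ sq_ua eq_sym neq_au /=.
apply/existsP=> -[v /and4P[sq_uv sq_va neq_vu neq_va]].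
have := ht_lt sq_va neq_va; rewrite ltnNge min_a //.
by rewrite /P sq_uv neq_vu (sq_trans _ _ _ sq_va sq_ax).
Qed.

(* The branching node is a maximal common lower bound of [x] and [y]. *)
Lemma imm_succ_split z x y : sq z x -> sq z y -> ~~ sq x y -> ~~ sq y x ->
  exists u a b, [&& imm_succ sq u a, imm_succ sq u b, a != b, sq a x & sq b y].
Proof.
move=> sq_zx sq_zy nsq_xy nsq_yx.
pose P u := sq u x && sq u y.
have Pz : P z by rewrite /P sq_zx.
case: (arg_maxnP (ht sq) Pz) => u /andP[sq_ux sq_uy] max_u.
have neq_ux : u != x by apply: contraNneq nsq_xy => <-.
have neq_uy : u != y by apply: contraNneq nsq_yx => <-.
have [a succ_a sq_ax] := imm_succ_below sq_ux neq_ux.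
have [b succ_b sq_by] := imm_succ_below sq_uy neq_uy.
exists u, a, b; rewrite succ_a succ_b sq_ax sq_by /= andbT.
apply: contraTneq succ_a => eq_ab; subst a; apply/negP=> /and3P[sq_ub neq_ub _].
have : ht sq b <= ht sq u by apply: max_u; rewrite /P sq_ax sq_by.
by rewrite leqNgt ht_lt.
Qed.

End Heights.

Section Branches.
Variables (T : finType) (sq : rel T).
Hypothesis sq_forest : is_forest sq.

Let sq_porder : is_porder sq := sq_forest.1.
Let sq_refl : reflexive sq. Proof. by case: sq_porder. Qed.
Let sq_trans : transitive sq. Proof. by case: sq_porder. Qed.

Lemma sq_ht_inj s : {in [pred z | sq z s] &, injective (ht sq)}.
Proof.
move=> y z /= sq_ys sq_zs eq_ht; case/orP: (sq_forest.2 _ _ _ sq_ys sq_zs).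
  by move/(sq_ht_eq sq_porder); apply.
by move/(sq_ht_eq sq_porder)/(_ (esym eq_ht)).
Qed.

(* Injectivity of [ht] on the predecessors of [s] forces them to realise every height. *)
Lemma exists_pred_of_ht s i : i < ht sq s -> exists2 z, sq z s & ht sq z = i.+1.
Proof.
move=> lt_i_s; pose hts := [seq ht sq z | z <- enum [set z | sq z s]].
have uniq_hts : uniq hts.
  rewrite map_inj_in_uniq ?enum_uniq // => y z; rewrite !mem_enum !inE.
  exact: sq_ht_inj.
have sub_hts : {subset hts <= iota 1 (ht sq s)}.
  move=> k /mapP[z]; rewrite mem_enum inE => sq_zs ->.
  by rewrite mem_iota ht_gt0 //= add1n ltnS ht_le.
have size_hts : size (iota 1 (ht sq s)) <= size hts.
  by rewrite size_iota size_map -cardE.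
have [_ eq_hts] := uniq_min_size uniq_hts sub_hts size_hts.
have : i.+1 \in hts by rewrite eq_hts mem_iota add1n ltnS.
by case/mapP=> z; rewrite mem_enum inE => sq_zs ->; exists z.
Qed.

Lemma pred_at_sq s i : sq (pred_at sq s i) s.
Proof. by rewrite /pred_at; case: pickP => [z /andP[]|]. Qed.

Lemma ht_pred_at s i : i < ht sq s -> ht sq (pred_at sq s i) = i.+1.
Proof.
move=> lt_i_s; rewrite /pred_at; case: pickP => [z /andP[_ /eqP]|] // no_z.
by have [z sq_zs /eqP ht_z] := exists_pred_of_ht lt_i_s; move: (no_z z); rewrite sq_zs ht_z.
Qed.

Lemma pred_at_top s : pred_at sq s (ht sq s).-1 = s.
Proof.
apply: (sq_ht_eq sq_porder (pred_at_sq s (ht sq s).-1)).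
by rewrite ht_pred_at prednK // ht_gt0.
Qed.

Lemma pred_at_sq_eq s s' i : sq s s' -> i < ht sq s -> pred_at sq s' i = pred_at sq s i.
Proof.
move=> sq_ss' lt_i_s; have lt_i_s' := leq_trans lt_i_s (ht_le sq_trans sq_ss').
apply: sq_ht_inj (pred_at_sq s' i) _ _; last by rewrite !ht_pred_at.
exact: sq_trans (pred_at_sq s i) sq_ss'.
Qed.

Definition branch s : seq T := map (pred_at sq s) (iota 0 (ht sq s)).

Lemma size_branch s : size (branch s) = ht sq s.
Proof. by rewrite size_map size_iota. Qed.

Lemma nth_branch x0 s i : i < ht sq s -> nth x0 (branch s) i = pred_at sq s i.
Proof. by move=> lt_i_s; rewrite (nth_map 0) ?size_iota // nth_iota. Qed.

Lemma branch_top x0 s : nth x0 (branch s) (ht sq s).-1 = s.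
Proof. by rewrite nth_branch ?pred_at_top // prednK // ht_gt0. Qed.

Lemma take_branch s s' : sq s s' -> take (ht sq s) (branch s') = branch s.
Proof.
move=> sq_ss'; rewrite /branch -map_take take_iota (minn_idPl (ht_le sq_trans sq_ss')).
by apply/eq_in_map => i; rewrite mem_iota add0n => lt_i_s; apply: pred_at_sq_eq.
Qed.

End Branches.

Lemma oplus1_porder (T : finType) (sq : rel T) : is_porder sq -> is_porder (oplus1 sq).
Proof.
case=> sq_refl sq_anti sq_trans; split.
- by case=> //=.
- by case=> [x|] [y|] //= /sq_anti ->.
- by case=> [x|] [y|] [z|] //=; apply: sq_trans.
Qed.

Lemma oplus1_linorder (T : finType) (le : rel T) : is_linorder le -> is_linorder (oplus1 le).
Proof. by case=> /oplus1_porder ? le_total; split=> // [[x|] [y|]] //=. Qed.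

Lemma linorder_ordered_tree_structure (T : finType) (sq sib : rel T) :
  is_linorder sib -> ordered_tree_structure sq sib.
Proof.
case=> -[sib_refl sib_anti sib_trans] sib_total u; split.
- by move=> a _; apply: sib_refl.
- by move=> a b _ _ le_ab le_ba; apply: sib_anti; rewrite le_ab le_ba.
- by move=> a b c _ _ _; apply: sib_trans.
- by move=> a b _ _; apply: sib_total.
Qed.

Lemma imm_succ_oplus1 (T : finType) (sq : rel T) u a :
  imm_succ (oplus1 sq) u a -> exists a', a = Some a'.
Proof. by case: a => [a'|]; [exists a' | case: u => [u|] /and3P[]]. Qed.

Section ConvexExtension.
Variables (T : finType) (sq le : rel T).
Hypotheses (sq_forest : is_forest sq) (le_linorder : is_linorder le).
Hypothesis sq_le : forall x y, sq x y -> le x y.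
Hypothesis sq_convex : forall a x y, sq a x -> le a y -> le y x -> sq a y.

Let le_anti : antisymmetric le. Proof. by case: le_linorder => -[]. Qed.
Let le_trans : transitive le. Proof. by case: le_linorder => -[]. Qed.
Let le_total : total le. Proof. by case: le_linorder. Qed.

(* If [y < x], then [b <= y < x] and [a <= b], so convexity puts [b] above [a],
   contradicting that [b] is an immediate successor of [u]. *)
Lemma lex_branch_le u a b x y :
  imm_succ (oplus1 sq) u a -> imm_succ (oplus1 sq) u b -> a != b ->
  oplus1 sq a (Some x) -> oplus1 sq b (Some y) -> oplus1 le a b -> le x y.
Proof.
move=> succ_a succ_b neq_ab.
have [a' eq_a] := imm_succ_oplus1 succ_a; have [b' eq_b] := imm_succ_oplus1 succ_b.
subst a b => /= sq_a'x sq_b'y le_a'b'; case/orP: (le_total x y) => // le_yx.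
have sq_a'b' : sq a' b'.
  by apply: sq_convex sq_a'x le_a'b' (le_trans (sq_le sq_b'y) le_yx).
case/and3P: succ_b => _ _ /existsP; case; exists (Some a').
case/and3P: succ_a => sq_ua neq_ua _.
by rewrite /= sq_ua sq_a'b' eq_sym neq_ua neq_ab.
Qed.

Lemma lex_le_oplus1 x y : lex_le (oplus1 sq) (oplus1 le) (Some x) (Some y) = le x y.
Proof.
have [[sq_refl _ _] _] := sq_forest.
apply/idP/idP => [|le_xy].
  case/orP=> [/sq_le //|/existsP[u /existsP[a /existsP[b]]]].
  case/and5P=> succ_a succ_b neq_ab sq_ax /andP[sq_by le_ab].
  exact: lex_branch_le succ_a succ_b neq_ab sq_ax sq_by le_ab.
rewrite /lex_le /=; case sq_xy: (sq x y) => //=.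
have nsq_yx : ~~ sq y x.
  apply: contraFN sq_xy => sq_yx; suff -> : x = y by [].
  by apply: le_anti; rewrite le_xy sq_le.
have [u [a [b /and5P[succ_a succ_b neq_ab sq_ax sq_by]]]] :=
  imm_succ_split (oplus1_porder sq_forest.1) (z := None) (x := Some x) (y := Some y)
    erefl erefl (negbT sq_xy) nsq_yx.
apply/existsP; exists u; apply/existsP; exists a; apply/existsP; exists b.
rewrite succ_a succ_b neq_ab sq_ax sq_by /=.
have [a' eq_a] := imm_succ_oplus1 succ_a; have [b' eq_b] := imm_succ_oplus1 succ_b.
move: (le_total a' b'); rewrite eq_a eq_b /= => /orP[//|le_b'a'].
suff eq_xy : x = y by rewrite eq_xy sq_refl in sq_xy.
apply: le_anti; rewrite le_xy.
by apply: lex_branch_le succ_b succ_a _ sq_by sq_ax _; rewrite 1?eq_sym // eq_a eq_b.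
Qed.

Lemma ordered_forest_of_convex_extension : ordered_forest sq le.
Proof.
split=> //; exists (oplus1 le); split; last by move=> x y; rewrite lex_le_oplus1.
exact/linorder_ordered_tree_structure/oplus1_linorder.
Qed.

End ConvexExtension.

Lemma rcons_take_nth (T : Type) (x0 : T) (s : seq T) (n : nat) : size s = n.+1 ->
  rcons (take n s) (nth x0 s n) = s.
Proof. by move=> size_s; rewrite -take_nth ?size_s // take_oversize ?size_s. Qed.

Section Seqlex.
Variables (X : eqType) (r : rel X).

Lemma seqlex_refl : reflexive (seqlex r).
Proof. by elim=> //= x s IH; rewrite eqxx. Qed.

Lemma seqlex_anti : antisymmetric r -> antisymmetric (seqlex r).
Proof.
move=> r_anti; elim=> [|x s1 IH] [|y s2] //=; case: eqVneq => [<- /IH -> //|neq_xy].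
by move/r_anti/eqP; rewrite (negPf neq_xy).
Qed.

Lemma seqlex_trans : antisymmetric r -> transitive r -> transitive (seqlex r).
Proof.
move=> r_anti r_trans s2 s1 s3; elim: s1 s2 s3 => [|x s1 IH] [|y s2] [|z s3] //=.
case: (eqVneq x y) => [<-|neq_xy]; first by case: eqVneq => // _; apply: IH.
case: (eqVneq y z) => [<-|neq_yz r_xy r_yz]; first by rewrite (negPf neq_xy).
case: eqVneq r_yz => [<- r_yx|_]; last exact: r_trans r_xy.
by case/eqP: neq_xy; apply: r_anti; rewrite r_xy r_yx.
Qed.

Lemma seqlex_catl p s1 s2 : seqlex r (p ++ s1) (p ++ s2) = seqlex r s1 s2.
Proof. by elim: p => //= x p IH; rewrite eqxx. Qed.

Lemma seqlex_between : antisymmetric r -> forall p x1 s1 x2 s2 s,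
  seqlex r (p ++ x1 :: s1) s -> seqlex r s (p ++ x2 :: s2) ->
  exists y s', s = p ++ y :: s' /\ seqlex r (x1 :: s1) (y :: s').
Proof.
move=> r_anti; elim=> [|x p IH] x1 s1 x2 s2 [|y s] //=; first by exists y, s.
case: eqVneq => [<- le1 le2|neq_xy le1 le2].
  by have [y' [s' [-> le']]] := IH _ _ _ _ _ le1 le2; exists y', s'.
by case/eqP: neq_xy; apply: r_anti; rewrite le1 le2.
Qed.

End Seqlex.

Section Alternate.
Variables (A B : Type).

Definition alternate (ss : seq A) (ts : seq B) : seq (A + B) :=
  flatten [seq [:: inl p.1; inr p.2] | p <- zip ss ts].

Definition lefts (l : seq (A + B)) : seq A :=
  pmap (fun e => if e is inl a then Some a else None) l.

Definition rights (l : seq (A + B)) : seq B :=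
  pmap (fun e => if e is inr b then Some b else None) l.

Lemma alternate_cons s ss t ts :
  alternate (s :: ss) (t :: ts) = inl s :: inr t :: alternate ss ts.
Proof. by []. Qed.

Lemma alternate_cat ss1 ss2 ts1 ts2 : size ss1 = size ts1 ->
  alternate (ss1 ++ ss2) (ts1 ++ ts2) = alternate ss1 ts1 ++ alternate ss2 ts2.
Proof.
by elim: ss1 ts1 => [|s ss1 IH] [|t ts1] // [/IH eq]; rewrite !cat_cons !alternate_cons eq.
Qed.

Lemma alternate_nth (a0 : A) (b0 : B) ss ts i :
  size ss = size ts -> i < size ss ->
  alternate ss ts = alternate (take i ss) (take i ts) ++
    inl (nth a0 ss i) :: inr (nth b0 ts i) :: alternate (drop i.+1 ss) (drop i.+1 ts).
Proof.
move=> eq_size lt_i; have lt_i' : i < size ts by rewrite -eq_size.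
rewrite -{1}(cat_take_drop i ss) -{1}(cat_take_drop i ts) (drop_nth a0 lt_i) (drop_nth b0 lt_i').
by rewrite alternate_cat ?size_takel ?eq_size // ltnW.
Qed.

Lemma alternate_map (A0 : Type) (f : A0 -> A) (ss : seq A0) (ts : seq B) :
  flatten [seq [:: inl (f p.1); inr p.2] | p <- zip ss ts] = alternate (map f ss) ts.
Proof. by elim: ss ts => [|s ss IH] [|t ts] //=; rewrite IH. Qed.

Lemma lefts_cat l1 l2 : lefts (l1 ++ l2) = lefts l1 ++ lefts l2.
Proof. exact: pmap_cat. Qed.

Lemma rights_cat l1 l2 : rights (l1 ++ l2) = rights l1 ++ rights l2.
Proof. exact: pmap_cat. Qed.

Lemma lefts_alternate ss ts : size ss = size ts -> lefts (alternate ss ts) = ss.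
Proof.
by elim: ss ts => [|s ss IH] [|t ts] // [/IH eq]; rewrite alternate_cons /lefts /= -/(lefts _) eq.
Qed.

Lemma rights_alternate ss ts : size ss = size ts -> rights (alternate ss ts) = ts.
Proof.
by elim: ss ts => [|s ss IH] [|t ts] // [/IH eq]; rewrite alternate_cons /rights /= -/(rights _) eq.
Qed.

End Alternate.

Lemma seqlex_alternate_total (A B : eqType) (r : rel (A + B)) :
  (forall a a', r (inl a) (inl a') || r (inl a') (inl a)) ->
  (forall b b', r (inr b) (inr b') || r (inr b') (inr b)) ->
  forall ss1 ss2 ts1 ts2, size ss1 = size ts1 -> size ss2 = size ts2 ->
  seqlex r (alternate ss1 ts1) (alternate ss2 ts2) ||
  seqlex r (alternate ss2 ts2) (alternate ss1 ts1).
Proof.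
move=> r_totall r_totalr; elim=> [|s1 ss1 IH] [|s2 ss2] [|t1 ts1] [|t2 ts2] //=;
  rewrite ?orbT // => -[size1] [size2].
case: (eqVneq (inl s1 : A + B) (inl s2)) => [_|_]; last exact: r_totall.
case: (eqVneq (inr t1 : A + B) (inr t2)) => [_|_]; last exact: r_totalr.
exact: IH.
Qed.

Section Tensor.
Variables (S : finType) (sqS leS : rel S) (d : Order.disp_t) (I : finOrderType d).
Hypothesis sqS_forest : is_forest sqS.

Local Notation ST := (tensor sqS I).
Local Notation tsq := (@tsq S sqS d I).
Local Notation tle := (@tle S sqS leS d I).

Let sqS_porder : is_porder sqS := sqS_forest.1.
Let sqS_refl : reflexive sqS. Proof. by case: sqS_porder. Qed.
Let sqS_trans : transitive sqS. Proof. by case: sqS_porder. Qed.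

Lemma tsqE (x0 : I) (s s' : S) (t : (ht sqS s).-tuple I) (t' : (ht sqS s').-tuple I) :
  tsq (Tagged _ t) (Tagged _ t') =
  [&& sqS s s', take (ht sqS s).-1 t == take (ht sqS s).-1 t'
    & (nth x0 t (ht sqS s).-1 <= nth x0 t' (ht sqS s).-1)%O].
Proof.
rewrite /tsq /=; case: (boolP (sqS s s')) => //= sq_ss'.
have lt_t : (ht sqS s).-1 < size t by rewrite size_tuple prednK // ht_gt0.
have lt_t' : (ht sqS s).-1 < size t'.
  by rewrite size_tuple; apply: leq_trans lt_t _; rewrite size_tuple ht_le.
by rewrite !onthE !(nth_map x0).
Qed.

Lemma tsq_tag (x y : ST) : tsq x y -> sqS (tag x) (tag y).
Proof. by case/and3P. Qed.

Let default (s : S) (t : (ht sqS s).-tuple I) : I := tnth t (Ordinal (ht_gt0 sqS_refl s)).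

Lemma tsq_refl : reflexive tsq.
Proof. by case=> s t; rewrite (tsqE (default t)) sqS_refl eqxx le_refl. Qed.

Lemma tsq_anti : antisymmetric tsq.
Proof.
case=> s t [s' t']; rewrite !(tsqE (default t)).
case/andP=> /and3P[sq_ss' /eqP take_tt' le_tt'] /and3P[sq_s's _ le_t't].
have eq_ss' : s = s' by case: sqS_porder => _ sqS_anti _; apply: sqS_anti; rewrite sq_ss'.
subst s'; congr existT; apply: val_inj => /=.
have size_t (u : (ht sqS s).-tuple I) : size u = (ht sqS s).-1.+1.
  by rewrite size_tuple prednK // ht_gt0.
rewrite -(rcons_take_nth (default t) (size_t t)) -(rcons_take_nth (default t) (size_t t')).
have -> : nth (default t) t (ht sqS s).-1 = nth (default t) t' (ht sqS s).-1.
  by apply: le_anti; rewrite le_tt' le_t't.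
by rewrite take_tt'.
Qed.

Lemma ht_pred_le s s' : sqS s s' -> (ht sqS s).-1 <= (ht sqS s').-1.
Proof. by move=> sq_ss'; rewrite -!subn1 leq_sub2r // ht_le. Qed.

Lemma tsq_trans : transitive tsq.
Proof.
case=> s2 t2 [s1 t1] [s3 t3]; rewrite !(tsqE (default t1)).
case/and3P=> sq12 /eqP take12 le12 /and3P[sq23 /eqP take23 le23].
have le_h := ht_pred_le sq12.
rewrite (sqS_trans sq12 sq23) take12 -(take_takel _ le_h) take23 take_takel // eqxx /=.
apply: le_trans le12 _; case: (ltnP (ht sqS s1).-1 (ht sqS s2).-1) => [lt_h|ge_h].
  by rewrite -(nth_take _ lt_h) take23 nth_take.
have -> : (ht sqS s1).-1 = (ht sqS s2).-1 by apply/eqP; rewrite eqn_leq le_h.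
exact: le23.
Qed.

Lemma tsq_pred_total (x y z : ST) : tsq y x -> tsq z x -> tsq y z || tsq z y.
Proof.
move=> tsq_yx tsq_zx.
wlog sq_yz : y z tsq_yx tsq_zx / sqS (tag y) (tag z).
  move=> wlog_yz; case/orP: (sqS_forest.2 _ _ _ (tsq_tag tsq_yx) (tsq_tag tsq_zx)).
    exact: wlog_yz.
  by rewrite orbC; apply: wlog_yz.
case: x y z tsq_yx tsq_zx sq_yz => s t [sy ty] [sz tz] /=; rewrite !(tsqE (default t)).
case/and3P=> _ /eqP take_y le_y /and3P[_ /eqP take_z le_z] sq_yz.
have le_h := ht_pred_le sq_yz.
have take_yz : take (ht sqS sy).-1 ty = take (ht sqS sy).-1 tz.
  by rewrite take_y -(take_takel _ le_h) -take_z take_takel.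
rewrite sq_yz take_yz eqxx /=; case: (ltnP (ht sqS sy).-1 (ht sqS sz).-1) => [lt_h|ge_h].
  by rewrite -(nth_take _ lt_h tz) take_z nth_take // le_y.
have eq_ht : ht sqS sy = ht sqS sz.
  rewrite -[LHS]prednK ?ht_gt0 // -[RHS]prednK ?ht_gt0 //.
  by congr _.+1; apply/eqP; rewrite eqn_leq le_h.
have eq_s := sq_ht_eq sqS_porder sq_yz eq_ht; subst sz.
by rewrite sqS_refl take_yz eqxx le_total.
Qed.

Lemma tsq_forest : is_forest tsq.
Proof.
split; last exact: tsq_pred_total.
by split; [exact: tsq_refl | exact: tsq_anti | exact: tsq_trans].
Qed.

Lemma interleaveE (x : ST) : interleave x = alternate (branch sqS (tag x)) (tagged x).
Proof. exact: alternate_map. Qed.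

Lemma interleave_inj : injective (@interleave S sqS d I).
Proof.
case=> s t [s' t']; rewrite !interleaveE /= => eq_il.
have := congr1 (@lefts _ _) eq_il; have := congr1 (@rights _ _) eq_il.
rewrite !lefts_alternate ?rights_alternate ?size_branch ?size_tuple // => eq_t eq_br.
have eq_s : s = s'.
  by rewrite -(branch_top sqS_forest s s) -size_branch eq_br size_branch branch_top.
by subst s'; congr existT; apply: val_inj.
Qed.

Lemma tsq_interleave (x y : ST) : tsq x y -> exists P a b R,
  [/\ interleave x = P ++ [:: inl (tag x); inr a],
      interleave y = P ++ inl (tag x) :: inr b :: R & (a <= b)%O].
Proof.
case: x y => s t [s' t']; rewrite (tsqE (default t)) => /and3P[sq_ss' /eqP take_tt' le_tt'].
have lt_h : (ht sqS s).-1 < ht sqS s by rewrite prednK // ht_gt0.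
have lt_h' := leq_trans lt_h (ht_le sqS_trans sq_ss').
have take_br : take (ht sqS s).-1 (branch sqS s') = take (ht sqS s).-1 (branch sqS s).
  by rewrite -(take_branch sqS_forest sq_ss') take_takel // leq_pred.
have nth_br : nth s (branch sqS s') (ht sqS s).-1 = s.
  by rewrite -(nth_take _ lt_h) (take_branch sqS_forest sq_ss') branch_top.
rewrite !interleaveE /=.
rewrite (alternate_nth s (default t) (ss := branch sqS s) (ts := t) (i := (ht sqS s).-1))
  ?size_branch ?size_tuple // (branch_top sqS_forest) prednK ?ht_gt0 //.
rewrite !drop_oversize ?size_branch ?size_tuple //.
rewrite (alternate_nth s (default t) (ss := branch sqS s') (ts := t') (i := (ht sqS s).-1))
  ?size_branch ?size_tuple // take_br -take_tt' nth_br.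
by do 4 eexists; split; last exact: le_tt'.
Qed.

Lemma interleave_tsq (x y : ST) P a b R :
  interleave x = P ++ [:: inl (tag x); inr a] ->
  interleave y = P ++ inl (tag x) :: inr b :: R -> (a <= b)%O -> tsq x y.
Proof.
case: x y => s t [s' t']; rewrite !interleaveE /= => il_x il_y le_ab.
have := congr1 (@lefts _ _) il_x; have := congr1 (@lefts _ _) il_y.
have := congr1 (@rights _ _) il_x; have := congr1 (@rights _ _) il_y.
rewrite !lefts_alternate ?rights_alternate ?size_branch ?size_tuple //.
rewrite !lefts_cat !rights_cat /= => eq_t' eq_t eq_br' eq_br.
have size_P : size (rights P) = (ht sqS s).-1.
  by rewrite -(size_tuple t) eq_t size_cat addn1.
have size_P' : size (lefts P) = (ht sqS s).-1.
  by rewrite -(size_branch sqS s) eq_br size_cat addn1.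
rewrite (tsqE a) eq_t eq_t' !take_size_cat // eqxx !nth_cat size_P ltnn subnn le_ab andbT.
have lt_h : (ht sqS s).-1 < ht sqS s'.
  by rewrite -(size_branch sqS s') eq_br' size_cat size_P' -addn1 leq_add2l.
have := pred_at_sq sqS_forest s' (ht sqS s).-1.
by rewrite -(nth_branch s lt_h) eq_br' nth_cat size_P' ltnn subnn andbT.
Qed.

Lemma tsq_tle (x y : ST) : tsq x y -> tle x y.
Proof.
case/tsq_interleave=> P [a [b [R [il_x il_y le_ab]]]].
by rewrite /tle il_x il_y seqlex_catl /= eqxx; case: eqP.
Qed.

Lemma sumle_anti : antisymmetric leS -> antisymmetric (sumle leS (I := I)).
Proof.
move=> leS_anti [a|a] [b|b] //= le_ab; first by rewrite (leS_anti _ _ le_ab).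
by rewrite (le_anti le_ab).
Qed.

Lemma sumle_trans : transitive leS -> transitive (sumle leS (I := I)).
Proof. by move=> leS_trans [b|b] [a|a] [c|c] //=; [apply: leS_trans | apply: le_trans]. Qed.

Lemma tle_linorder : is_linorder leS -> is_linorder tle.
Proof.
case=> -[_ leS_anti leS_trans] leS_total; split; first split.
- by move=> x; apply: seqlex_refl.
- by move=> x y /(seqlex_anti (sumle_anti leS_anti)) /interleave_inj.
- by move=> y x z; apply: seqlex_trans; [apply: sumle_anti | apply: sumle_trans].
- move=> x y; rewrite /tle !interleaveE.
  by apply: seqlex_alternate_total; rewrite ?size_branch ?size_tuple //= => a b; apply: le_total.
Qed.

Lemma tsq_convex : antisymmetric leS ->
  forall a x y : ST, tsq a x -> tle a y -> tle y x -> tsq a y.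
Proof.
move=> leS_anti a x y /tsq_interleave[P [ca [cx [R [il_a il_x _]]]]].
rewrite /tle il_a il_x -!(cat_rcons (inl (tag a))) => le_ay le_yx.
have [c [w [il_y le_c]]] := seqlex_between (sumle_anti leS_anti) le_ay le_yx.
case: c le_c il_y => [//|cy] /= le_c; rewrite cat_rcons => il_y.
by apply: interleave_tsq il_a il_y _; case: eqP le_c => [[->]|].
Qed.

End Tensor.

Theorem lemma4p11 (S : finType) (sqS leS : rel S)
  (d : Order.disp_t) (I : finOrderType d) :
  ordered_forest sqS leS ->
  is_forest (@tsq S sqS d I) /\ ordered_forest (@tsq S sqS d I) (@tle S sqS leS d I).
Proof.
case=> sqS_forest leS_linorder _; have tsq_forest := tsq_forest I sqS_forest.
split=> //; apply: ordered_forest_of_convex_extension => //.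
- exact: tle_linorder.
- exact: tsq_tle.
- by apply: tsq_convex; case: leS_linorder => -[].
Qed.
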